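(* Let $K$ be a semifield. Let $P$ be a polygon with vertex set $V$ and a non-empty dissection $D$, and let $d=\{\zeta,\eta\}\in D$ be such that $D = \{d\}\cup D_2$ where $D_2$ is a dissection of the subpolygon $P_2$ with vertex set $V_2 = \{\varepsilon \in V : \eta \le \varepsilon \le \zeta\}$. Let $U_1 = \{\varepsilon\in V : \zeta<\varepsilon<\eta\}$, $U_2 = \{\varepsilon\in V : \eta<\varepsilon<\zeta\}$, and let $\alpha \in U_1$, $\beta \in U_2$. Let $f : \operatorname{diag}(P) \to K$ be a map such that $f|_{\operatorname{diag}(P_2)}$ satisfies the $T$-path formula with respect to $D_2$. Then \[ f(\zeta,\eta)^{-1}\big[ f(\alpha,\zeta)f(\eta,\beta) + f(\alpha,\eta)f(\zeta,\beta) \big] = \sum_{\pi\in\mathcal{T}_{P,D}(\alpha,\beta)} f(\pi). \]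
   Context: A semifield is a set $K$ with binary operations $+,\cdot$ such that $+$ is associative and commutative, $(K,\cdot)$ is a commutative group, and $\cdot$ distributes over $+$; $x/y := xy^{-1}$. A polygon is a finite set $V$ of at least three vertices with a cyclic order, pictured as a convex polygon in the plane with vertices anticlockwise. ''$a\le\varepsilon\le b$'' means $\varepsilon$ lies on the cyclic interval from $a$ to $b$ in the positive direction, endpoints included; ''$<$'' excludes the corresponding endpoint. A subpolygon is a subset of at least three vertices with induced cyclic order. A diagonal is a two-element subset of the vertex set (edges included); $\operatorname{diag}(Q)$ is the set of diagonals of $Q$; non-edges are internal. Diagonals cross if they consist of four distinct vertices $\alpha,\beta,\gamma,\delta$ appearing cyclically as $\alpha,\gamma,\beta,\delta$ or $\alpha,\delta,\beta,\gamma$. A dissection is a set of pairwise non-crossing internal diagonals. For a dissection $D$ of a polygon $Q$ and vertices $\pi_1\neq\pi_p$, a $T$-path from $\pi_1$ to $\pi_p$ is a tuple $(\pi_1,\dots,\pi_p)$ of vertices of $Q$ with: (i) $\{\pi_1,\pi_2\},\dots,\{\pi_{p-1},\pi_p\}$ pairwise different diagonals; (ii) no $\{\pi_i,\pi_{i+1}\}$ crosses a diagonal of $D$; (iii) each $\{\pi_{2j},\pi_{2j+1}\}$ lies in $D$, and these cross the segment $\{\pi_1,\pi_p\}$ at pairwise different points progressing monotonically from $\pi_1$ to $\pi_p$. $\mathcal{T}_{Q,D}(\alpha,\beta)$ is the set of these. With $f(\alpha,\beta):=f(\{\alpha,\beta\})$, $f(\pi) := \prod_{i\text{ odd}} f(\pi_i,\pi_{i+1})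 / \prod_{j\text{ even}} f(\pi_j,\pi_{j+1})$. A map $g:\operatorname{diag}(Q)\to K$ satisfies the $T$-path formula with respect to $D$ if $g(\alpha,\beta) = \sum_{\pi\in\mathcal{T}_{Q,D}(\alpha,\beta)} g(\pi)$ for all vertices $\alpha\neq\beta$ of $Q$. *)

From mathcomp Require Import all_boot.
Set Implicit Arguments. Unset Strict Implicit. Unset Printing Implicit Defensive.

Record semifield := Semifield {
  sf_car :> Type;
  sf_add : sf_car -> sf_car -> sf_car;
  sf_mul : sf_car -> sf_car -> sf_car;
  sf_one : sf_car;
  sf_inv : sf_car -> sf_car;
  sf_addA : forall x y z, sf_add x (sf_add y z) = sf_add (sf_add x y) z;
  sf_addC : forall x y, sf_add x y = sf_add y x;
  sf_mulA : forall x y z, sf_mul x (sf_mul y z) = sf_mul (sf_mul x y) z;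
  sf_mulC : forall x y, sf_mul x y = sf_mul y x;
  sf_mul1 : forall x, sf_mul sf_one x = x;
  sf_mulV : forall x, sf_mul (sf_inv x) x = sf_one;
  sf_mulDl : forall x y z, sf_mul (sf_add x y) z = sf_add (sf_mul x z) (sf_mul y z)
}.

Section Polygon.
(* The polygon P has vertex set 'I_n with the cyclic order 0 -> 1 -> ... -> n-1 -> 0. *)
Variable n : nat.
Implicit Types (a b c d e v x y : 'I_n) (S : {set 'I_n}) (D : {set {set 'I_n}}).

(* cyc_le a e b : "a <= e <= b", e on the cyclic interval from a to b
   (positive direction), endpoints included. *)
Definition cyc_le a e b : bool :=
  if a <= b then (a <= e) && (e <= b) else (a <= e) || (e <= b).

Definition cyc_lt a e b : bool := [&& cyc_le a e b, e != a & e != b].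

Definition crossv a b c d : bool :=
  uniq [:: a; b; c; d] &&
  ((cyc_lt a c b && cyc_lt b d a) || (cyc_lt a d b && cyc_lt b c a)).

Definition is_diag S (dg : {set 'I_n}) : bool := (dg \subset S) && (#|dg| == 2).

Definition crossd (d1 d2 : {set 'I_n}) : bool :=
  [exists a, exists b, exists c, exists c',
     [&& d1 == [set a; b], d2 == [set c; c'] & crossv a b c c']].

(* {a,b} is an edge of the subpolygon with vertex set S
   (induced cyclic order): no vertex of S strictly between a and b on one side. *)
Definition is_edge S a b : bool :=
  [forall v in S, ~~ cyc_lt a v b] || [forall v in S, ~~ cyc_lt b v a].

Definition internal S (dg : {set 'I_n}) : bool :=
  is_diag S dg && [forall a, forall b, (dg == [set a; b]) ==> ~~ is_edge S a b].

Definition dissection S D : bool :=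
  [forall dg in D, internal S dg] && [forall d1 in D, forall d2 in D, ~~ crossd d1 d2].

(* For a diagonal d2 crossing the segment {a,b}, d1 comes strictly before d2 along
   the segment from a to b iff d1 <> d2 and d1 lies in the closed side of d2
   containing a. *)
Definition prec a (d1 d2 : {set 'I_n}) : bool :=
  (d1 != d2) &&
  [exists x, exists y,
     [&& d2 == [set x; y], cyc_lt x a y & [forall v in d1, cyc_le x v y]]].

Definition steps (s : seq 'I_n) : seq {set 'I_n} :=
  [seq [set p.1; p.2] | p <- zip s (behead s)].

(* T-path (pi_1, ..., pi_p) from a to b in the subpolygon S w.r.t. D.
   0-based step index i corresponds to 1-based index i+1, so the steps
   {pi_2j, pi_2j+1} are those with odd 0-based index. *)
Definition is_Tpath S D a b (s : seq 'I_n) : bool :=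
  match s with
  | [::] => false
  | x :: t =>
    let st := steps s in
    let m := size st in
    [&& x == a, last x t == b, a != b, all (fun v => v \in S) s,
        all (fun p => p.1 != p.2) (zip s (behead s)),
        uniq st,
        all (fun dg => [forall e in D, ~~ crossd dg e]) st,
        [forall i : 'I_m, odd i ==>
            (nth set0 st i \in D) && crossd (nth set0 st i) [set a; b]] &
        [forall i : 'I_m, forall j : 'I_m, [&& odd i, odd j & i < j] ==>
            prec a (nth set0 st i) (nth set0 st j)]]
  end.

Fixpoint seqs_upto (N : nat) : seq (seq 'I_n) :=
  match N with
  | 0 => [:: [::]]
  | N'.+1 => [::] :: [seq x :: s | x <- enum 'I_n, s <- seqs_upto N']
  end.

(* The set T_{S,D}(a,b), as a duplicate-free list.  Since the p-1 diagonals of a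
   T-path are pairwise different, p <= n*n + 1, so the bound loses nothing. *)
Definition Tpaths S D a b : seq (seq 'I_n) :=
  [seq s <- seqs_upto (n * n).+1 | is_Tpath S D a b s].

Variable K : semifield.

Definition sf_prod (l : seq K) : K := foldr (@sf_mul K) (sf_one K) l.

(* f(pi) = prod_{i odd} f(pi_i,pi_i+1) / prod_{j even} f(pi_j,pi_j+1) (1-based). *)
Definition fval (f : {set 'I_n} -> K) (s : seq 'I_n) : K :=
  let st := steps s in
  sf_mul (sf_prod [seq f (nth set0 st i) | i <- iota 0 (size st) & ~~ odd i])
         (sf_inv (sf_prod [seq f (nth set0 st i) | i <- iota 0 (size st) & odd i])).

(* Finite sum in a semifield (which may have no zero): None for the empty sum. *)
Definition ssum (l : seq K) : option K :=
  foldr (fun (t : K) (acc : option K) => Some (match acc with None => t | Some u => sf_add t u end))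
        None l.

Definition Tpath_formula S D (f : {set 'I_n} -> K) : Prop :=
  forall a b, a \in S -> b \in S -> a != b ->
    Some (f [set a; b]) = ssum [seq fval f p | p <- Tpaths S D a b].

End Polygon.

From mathcomp Require Import all_boot zify.
From Stdlib Require Import Setoid.
Set Implicit Arguments. Unset Strict Implicit. Unset Printing Implicit Defensive.

(* Write x' for the end of d = {zeta, eta} other than x.  A T-path of P from
   alpha to beta cannot cross d, and its other vertices are beta or lie on
   diagonals of D, hence in P2; so it starts alpha, x with x an end of d.
   Replacing alpha by x' -- or, when the path continues along d to x', deleting
   alpha and x -- yields a T-path of P2 from x' to beta, and every such T-path
   arises exactly once.  Both paths have the same steps in D apart from d itself;
   none of these contains x', so crossing {alpha, beta} or {x', beta}, and the
   order of the crossings along either segment, agree.  The weights differ by the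
   factor f(alpha, x) / f(d), so the sum over T_{P,D}(alpha, beta) is
   f(alpha, zeta)/f(d) * f(eta, beta) + f(alpha, eta)/f(d) * f(zeta, beta) by the
   T-path formula in P2.  Facts about the cyclic order are checked by numbering
   the vertices from a base vertex, which turns them into linear arithmetic. *)

Fixpoint evens (T : Type) (s : seq T) : seq T :=
  if s is x :: t then x :: odds t else [::]
with odds (T : Type) (s : seq T) : seq T :=
  if s is _ :: t then evens t else [::].

Section Alternate.
Variables (T : Type) (x0 : T).
Implicit Type s : seq T.

Lemma nth_evens_odds s :
  (forall k, nth x0 (evens s) k = nth x0 s k.*2) /\
  (forall k, nth x0 (odds s) k = nth x0 s k.*2.+1).
Proof.
elim: s => [|x s [IHe IHo]]; first by split=> k; rewrite /= !nth_nil.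
by split=> [[|k]|k] //=; rewrite ?IHo ?IHe.
Qed.

Lemma nth_odds s k : nth x0 (odds s) k = nth x0 s k.*2.+1.
Proof. exact: (proj2 (nth_evens_odds s)). Qed.

Lemma size_odds s : size (odds s) = (size s)./2.
Proof.
suff: size (evens s) = uphalf (size s) /\ size (odds s) = (size s)./2 by case.
by elim: s => [|x s [IHe IHo]] //=; rewrite IHo IHe uphalfE.
Qed.

Lemma odd_index (m i : nat) : odd i -> i < m ->
  i = (i./2).*2.+1 /\ i./2 < m./2.
Proof.
move=> oi im; have Ei := odd_double_half i; have Em := odd_double_half m.
rewrite oi -!muln2 in Ei Em *; split; lia.
Qed.

Lemma odd_index_lt (m k : nat) : k < m./2 -> k.*2.+1 < m.
Proof. have := odd_double_half m; rewrite -!muln2; lia. Qed.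

Lemma all_odds_nth s (P : pred T) :
  [forall i : 'I_(size s), odd i ==> P (nth x0 s i)] = all P (odds s).
Proof.
apply/forallP/(all_nthP x0) => [H k | H i].
  rewrite size_odds nth_odds => /odd_index_lt ks.
  by move: (H (Ordinal ks)); rewrite /= odd_double.
apply/implyP => oi; have [Ei lti] := odd_index oi (ltn_ord i).
by move: lti; rewrite -size_odds => /H; rewrite nth_odds -Ei.
Qed.

Lemma pairwise_odds_nth s (r : rel T) :
  [forall i : 'I_(size s), forall j : 'I_(size s),
     [&& odd i, odd j & i < j] ==> r (nth x0 s i) (nth x0 s j)]
  = pairwise r (odds s).
Proof.
apply/forallP/(pairwiseP x0) => [H k k' | H i].
  rewrite !inE size_odds !nth_odds => /odd_index_lt ks /odd_index_lt ks' kk'.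
  move: (H (Ordinal ks)) => /forallP /(_ (Ordinal ks')) /=.
  by rewrite !odd_double ltnS ltn_double kk'; apply.
apply/forallP => j; apply/implyP => /and3P[oi oj ij].
have [Ei lti] := odd_index oi (ltn_ord i); have [Ej ltj] := odd_index oj (ltn_ord j).
have ij' : i./2 < j./2 by move: ij Ei Ej; rewrite -!muln2; lia.
rewrite -size_odds in lti ltj.
by move: (H _ _ lti ltj ij'); rewrite !nth_odds -Ei -Ej.
Qed.

Lemma map_nth_iota_parity (U : Type) (F : T -> U) s (b : bool) :
  [seq F (nth x0 s i) | i <- iota 0 (size s) & odd i == b]
  = map F (if b then odds s else evens s).
Proof.
elim: s b => [|x s IH] b; first by case: b.
rewrite [size _]/= [iota _ _]/= -[1]/(1 + 0) iotaDl [filter _ _]/=.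
have -> : [seq i <- [seq 1 + i | i <- iota 0 (size s)] | odd i == b]
        = [seq 1 + i | i <- iota 0 (size s) & odd i == ~~ b].
  by rewrite filter_map; congr map; apply: eq_filter => i /=; case: b; case: odd.
by case: b (IH (~~ b)) => /= <-; rewrite -map_comp.
Qed.

End Alternate.

(** * The cyclic order in positions counted from a base vertex *)

Definition between (x e y : nat) : Prop :=
  (x < e /\ e < y) \/ (y < x /\ x < e) \/ (e < y /\ y < x).

Definition cross_nat (a b c d : nat) : Prop :=
  a <> b /\ a <> c /\ a <> d /\ b <> c /\ b <> d /\ c <> d /\
  (between a c b <-> ~ between a d b).

Section CyclicPosition.
Variable n : nat.
Implicit Types (a b c d e h x y : 'I_n).

Definition cpos h x : nat := if h <= x then x - h else x + n - h.

Lemma cposxx h : cpos h h = 0.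
Proof. by rewrite /cpos leqnn subnn. Qed.

Lemma cpos_lt h x : cpos h x < n.
Proof. by rewrite /cpos; move: (ltn_ord h) (ltn_ord x); case: (leqP h x); lia. Qed.

Lemma eq_cpos h x y : x = y <-> cpos h x = cpos h y.
Proof.
split=> [-> //|]; rewrite /cpos; move: (ltn_ord h) (ltn_ord x) (ltn_ord y).
by case: (leqP h x); case: (leqP h y) => *; apply: val_inj => /=; lia.
Qed.

Lemma eqb_cpos h x y : x == y <-> cpos h x = cpos h y.
Proof. by rewrite -(eq_cpos h); split=> /eqP. Qed.

Lemma neq_cpos h x y : x != y <-> cpos h x <> cpos h y.
Proof. by rewrite -(eq_cpos h); split=> /eqP. Qed.

Lemma cyc_lt_cpos h x e y : cyc_lt x e y <-> between (cpos h x) (cpos h e) (cpos h y).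
Proof.
rewrite /between /cpos /cyc_lt /cyc_le -!val_eqE /=.
move: (ltn_ord h) (ltn_ord x) (ltn_ord e) (ltn_ord y).
by case: (leqP h x); case: (leqP h e); case: (leqP h y); case: (leqP x y) => *; split; lia.
Qed.

Lemma cyc_le_cpos h x e y : cyc_le x e y <->
  cpos h e = cpos h x \/ cpos h e = cpos h y \/ between (cpos h x) (cpos h e) (cpos h y).
Proof.
rewrite /between /cpos /cyc_le.
move: (ltn_ord h) (ltn_ord x) (ltn_ord e) (ltn_ord y).
by case: (leqP h x); case: (leqP h e); case: (leqP h y); case: (leqP x y) => *; split; lia.
Qed.

Lemma cyc_ltW a e b : cyc_lt a e b -> cyc_le a e b.
Proof. by case/andP. Qed.

Lemma cyc_lt_sym a b e : a != b -> e != a -> e != b -> cyc_lt b e a = ~~ cyc_lt a e b.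
Proof.
move=> ab ea eb; apply/idP/negP; move: ab ea eb;
  by rewrite -!(rwP negP) !(eqb_cpos a) !(cyc_lt_cpos a) /between; lia.
Qed.

Lemma crossvE a b c d : crossv a b c d =
  [&& a != b, a != c, a != d, b != c, b != d, c != d & cyc_lt a c b != cyc_lt a d b].
Proof.
rewrite /crossv /= !inE !negb_or !andbT.
case: (eqVneq a b) => //= ab; case: (eqVneq a c) => //= ac; case: (eqVneq a d) => //= ad.
case: (eqVneq b c) => //= bc; case: (eqVneq b d) => //= bd; case: (eqVneq c d) => //= cd.
rewrite !(cyc_lt_sym ab) 1?eq_sym //.
by case: (cyc_lt a c b); case: (cyc_lt a d b).
Qed.

Lemma xor_cyc_lt_cpos h a b c d : (cyc_lt a c b != cyc_lt a d b) <->
  (between (cpos h a) (cpos h c) (cpos h b) <-> ~ between (cpos h a) (cpos h d) (cpos h b)).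
Proof. by rewrite -!(cyc_lt_cpos h); case: cyc_lt; case: cyc_lt; split=> //=; intuition. Qed.

Lemma crossv_cpos h a b c d : crossv a b c d <->
  cross_nat (cpos h a) (cpos h b) (cpos h c) (cpos h d).
Proof.
rewrite crossvE /cross_nat -!(neq_cpos h) -(xor_cyc_lt_cpos h).
by split=> [/and5P[-> -> -> -> /and3P[-> -> ->]] | [-> [-> [-> [-> [-> [-> ->]]]]]]].
Qed.

End CyclicPosition.

Ltac cyc_lia h :=
  rewrite ?(cyc_lt_cpos h) ?(cyc_le_cpos h) ?(crossv_cpos h)
          -?(rwP negP) -?(rwP andP) -?(rwP orP)
          ?(neq_cpos h) ?(eqb_cpos h) ?(eq_cpos h) ?cposxx /cross_nat /between;
  repeat match goal with |- context [cpos ?h' ?x] =>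
    let r := fresh "r" in generalize (cpos h' x) as r end;
  intros; lia.

(** * Crossing diagonals *)

Section Crossing.
Variable n : nat.
Implicit Types (a b c d u v w x y : 'I_n) (e : {set 'I_n}) (S : {set 'I_n}) (D : {set {set 'I_n}}).

Lemma set2_inj a b c d : [set a; b] = [set c; d] -> (a = c /\ b = d) \/ (a = d /\ b = c).
Proof.
move=> E; have mem2 x : x \in [set a; b] -> x \in [set c; d] by rewrite E.
have mem1 x : x \in [set c; d] -> x \in [set a; b] by rewrite E.
have := mem2 a; have := mem2 b; have := mem1 c; have := mem1 d.
rewrite !inE !eqxx ?orbT -!val_eqE /= => /(_ isT) hd /(_ isT) hc /(_ isT) hb /(_ isT) ha.
have : ((a == c :> nat) && (b == d :> nat)) || ((a == d :> nat) && (b == c :> nat)) by lia.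
by case/orP=> /andP[/eqP h1 /eqP h2]; [left|right]; split; apply: val_inj.
Qed.

Lemma crossv_swapl a b c d : crossv a b c d = crossv b a c d.
Proof. by apply/idP/idP; cyc_lia a. Qed.

Lemma crossv_swapr a b c d : crossv a b c d = crossv a b d c.
Proof. by apply/idP/idP; cyc_lia a. Qed.

Lemma crossv_sym a b c d : crossv a b c d = crossv c d a b.
Proof. by apply/idP/idP; cyc_lia a. Qed.

Lemma crossd_set2 a b c d : crossd [set a; b] [set c; d] = crossv a b c d.
Proof.
apply/existsP/idP => [[a' /existsP[b' /existsP[c' /existsP[d' /and3P[/eqP E1 /eqP E2]]]]]|H].
  case: (set2_inj E1) => -[-> ->]; case: (set2_inj E2) => -[-> ->] //;
  by rewrite ?[crossv b' a' _ _]crossv_swapl ?[crossv _ _ d' c']crossv_swapr.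
by exists a; apply/existsP; exists b; apply/existsP; exists c; apply/existsP; exists d;
  rewrite !eqxx.
Qed.

Lemma crossd_sym e1 e2 : crossd e1 e2 = crossd e2 e1.
Proof.
suff sym (f1 f2 : {set 'I_n}) : crossd f1 f2 -> crossd f2 f1.
  by apply/idP/idP; apply: sym.
move=> /existsP[a /existsP[b /existsP[c /existsP[d /and3P[/eqP -> /eqP -> H]]]]].
by rewrite !crossd_set2 crossv_sym.
Qed.

Lemma crossd_disjoint e1 e2 v : crossd e1 e2 -> v \in e1 -> v \notin e2.
Proof.
case/existsP=> a /existsP[b /existsP[c /existsP[d /and3P[/eqP -> /eqP ->]]]].
rewrite crossvE => /and4P[_ ac ad /and4P[bc bd _ _]].
by rewrite !inE => /orP[] /eqP ->; rewrite negb_or ?ac ?ad ?bc ?bd.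
Qed.

Lemma forall_set2 (P : pred 'I_n) u v : [forall w in [set u; v], P w] = P u && P v.
Proof.
apply/forallP/andP => [H | [Pu Pv] w]; last by rewrite !inE; apply/implyP => /orP[] /eqP ->.
by split; [move: (H u) | move: (H v)]; rewrite !inE eqxx ?orbT.
Qed.

Lemma prec_set2 a e u v : prec a e [set u; v] =
  (e != [set u; v]) &&
  ((cyc_lt u a v && [forall w in e, cyc_le u w v]) ||
   (cyc_lt v a u && [forall w in e, cyc_le v w u])).
Proof.
rewrite /prec; congr (_ && _); apply/existsP/orP.
  case=> x /existsP[y /and3P[/eqP E a_in e_in]].
  by case: (set2_inj E) => -[-> ->]; [left | right]; rewrite a_in e_in.
case=> /andP[a_in e_in]; [exists u; apply/existsP; exists v | exists v; apply/existsP; exists u].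
  by rewrite eqxx a_in e_in.
by rewrite setUC eqxx a_in e_in.
Qed.

Lemma dissection_nocross S D e1 e2 : dissection S D -> e1 \in D -> e2 \in D ->
  ~~ crossd e1 e2.
Proof. by case/andP=> _ /forallP/(_ e1) /implyP H /H /forallP/(_ e2) /implyP. Qed.

Lemma dissection_diag S D e : dissection S D -> e \in D ->
  exists u v, [/\ e = [set u; v], u != v, u \in S & v \in S].
Proof.
case/andP=> /forallP/(_ e) /implyP H _ /H /andP[/andP[eS /cards2P[u [v [uv E]]]] _].
by exists u, v; split=> //; apply: (subsetP eS); rewrite E !inE eqxx ?orbT.
Qed.

Lemma dissection_set2_neq S D a b : dissection S D -> [set a; b] \in D -> a != b.
Proof.
move=> HD /(dissection_diag HD)[u [v [/set2_inj[][-> ->] uv _ _]]] //.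
by rewrite eq_sym.
Qed.

End Crossing.

(** * T-paths *)

Lemma all_cons (T : Type) (a : pred T) x s : all a (x :: s) = a x && all a s.
Proof. by []. Qed.

Section TPaths.
Variable n : nat.
Implicit Types (S : {set 'I_n}) (D : {set {set 'I_n}}) (a b u v x y : 'I_n) (t : seq 'I_n).

Lemma steps_cons2 x y t : steps (x :: y :: t) = [set x; y] :: steps (y :: t).
Proof. by []. Qed.

Lemma mem_steps x t (e : {set 'I_n}) : e \in steps (x :: t) ->
  exists u v, [/\ e = [set u; v], u \in x :: t & v \in x :: t].
Proof.
elim: t x => [|y t IH] x //; rewrite steps_cons2 inE => /orP[/eqP->|/IH[u [v [-> Hu Hv]]]].
  by exists x, y; rewrite !inE !eqxx orbT.
by exists u, v; split=> //; rewrite inE ?Hu ?Hv orbT.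
Qed.

Lemma mem_steps_vertex x t (e : {set 'I_n}) v : e \in steps (x :: t) -> v \in e -> v \in x :: t.
Proof. by case/mem_steps=> a [b [-> Ha Hb]]; rewrite !inE => /orP[] /eqP ->. Qed.

Lemma inner_vertex_odd_step x t v : v \in t -> v != last x t ->
  exists2 e, e \in odds (steps (x :: t)) & v \in e.
Proof.
have [N] := ubnP (size t); elim: N x t => [|N IH] x [|y [|z t]] //= tN.
  by rewrite inE => /eqP ->; rewrite eqxx.
rewrite !inE => /orP[/eqP->|/orP[/eqP->|vt]] vl; try by exists [set y; z]; rewrite !inE eqxx ?orbT.
have [|e ez ve] := IH z t _ vt vl; first by lia.
by exists e; rewrite // inE ez orbT.
Qed.

Lemma odds_steps_cons3 x y z t :
  odds (steps [:: x, y, z & t]) = [set y; z] :: odds (steps (z :: t)).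
Proof. by []. Qed.

Lemma uniq_steps_no_return u v w t : uniq (steps [:: u, v, w & t]) -> w != u.
Proof.
rewrite !steps_cons2 cons_uniq inE negb_or => /andP[/andP[uv_vw _] _].
by apply: contraNneq uv_vw => ->; rewrite setUC.
Qed.

Lemma notin_tail_odd_steps x t :
  {in odds (steps (x :: t)), forall e : {set 'I_n}, x \notin e} ->
  x != last x t -> x \notin t.
Proof.
move=> odd_x xl; apply/negP => /inner_vertex_odd_step/(_ xl)[e /odd_x].
by move/negP.
Qed.

(* [odds (steps s)] lists the steps {pi_2j, pi_2j+1} of the paper. *)
Record Tpath_spec S D a b t : Prop := TpathSpec {
  Tpath_last : last a t = b;
  Tpath_neq : a != b;
  Tpath_sub : all (fun v => v \in S) (a :: t);
  Tpath_adj : all (fun p => p.1 != p.2) (zip (a :: t) t);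
  Tpath_uniq : uniq (steps (a :: t));
  Tpath_nocross : all (fun g => [forall e in D, ~~ crossd g e]) (steps (a :: t));
  Tpath_odd : all (fun e => (e \in D) && crossd e [set a; b]) (odds (steps (a :: t)));
  Tpath_prec : pairwise (prec a) (odds (steps (a :: t))) }.

Lemma TpathP S D a b t : reflect (Tpath_spec S D a b t) (is_Tpath S D a b (a :: t)).
Proof.
rewrite /is_Tpath eqxx (pairwise_odds_nth set0 _ (prec a)).
rewrite (all_odds_nth set0 _ (fun e => (e \in D) && crossd e [set a; b])) /=.
apply: (iffP idP) => [|[-> -> /= -> -> -> -> -> ->]]; last by rewrite eqxx.
by case/and5P=> /eqP ? ? ? ? /and4P[? ? ? ?]; split.
Qed.

Lemma Tpath_head S D a b x t : is_Tpath S D a b (x :: t) -> x = a.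
Proof. by case/andP=> /eqP. Qed.

Lemma mem_seqs_upto N (s : seq 'I_n) : (s \in seqs_upto n N) = (size s <= N).
Proof.
elim: N s => [|N IH] [|x s] //=; rewrite inE /= ltnS; apply/allpairsP/idP.
  by case=> [[y s'] [_ Hs' /= E]]; case: E => _ ->; rewrite -IH.
by move=> Hs; exists (x, s); rewrite mem_enum IH.
Qed.

Lemma seqs_upto_uniq N : uniq (seqs_upto n N).
Proof.
elim: N => [//|N IH] /=; apply/andP; split; first by apply/negP => /allpairsP[[x s] []].
by apply: allpairs_uniq => [||[x s] [y s'] _ _ /= [-> ->]] //; apply: enum_uniq.
Qed.

Lemma size_Tpath S D a b (s : seq 'I_n) : is_Tpath S D a b s -> size s <= (n * n).+1.
Proof.
case: s => [//|x t] Hs; have x_a := Tpath_head Hs; subst x.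
case/TpathP: Hs => _ _ _ /allP adj uniq_st _ _ _.
have size_st : size (steps (a :: t)) = size t by rewrite size_map size2_zip /=.
have st_pairs : {subset steps (a :: t) <= enum [set A : {set 'I_n} | #|A| == 2]}.
  by move=> e /mapP[[u v] uv ->]; rewrite mem_enum inE cards2 adj.
have := uniq_leq_size uniq_st st_pairs.
rewrite -cardE card_draws card_ord bin2 size_st ltnS => /leq_trans; apply.
by rewrite -leq_double -!muln2; nia.
Qed.

Lemma mem_Tpaths S D a b (s : seq 'I_n) : (s \in Tpaths S D a b) = is_Tpath S D a b s.
Proof. by rewrite mem_filter mem_seqs_upto andb_idr //; apply: size_Tpath. Qed.

Lemma Tpaths_uniq S D a b : uniq (Tpaths S D a b).
Proof. by rewrite filter_uniq // seqs_upto_uniq. Qed.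

End TPaths.

Section SemifieldTheory.
Variable K : semifield.
Implicit Types x y z : K.
Local Notation "x * y" := (sf_mul x y).
Local Notation "x + y" := (sf_add x y).
Local Notation "1" := (sf_one K).
Local Notation "x ^-1" := (sf_inv x).

Lemma sf_mulr1 x : x * 1 = x.
Proof. by rewrite sf_mulC sf_mul1. Qed.

Lemma sf_mulVr x : x * x^-1 = 1.
Proof. by rewrite sf_mulC sf_mulV. Qed.

Lemma sf_mulKV x y : x^-1 * (x * y) = y.
Proof. by rewrite sf_mulA sf_mulV sf_mul1. Qed.

Lemma sf_mulACA x y z t : (x * y) * (z * t) = (x * z) * (y * t).
Proof. by rewrite -!sf_mulA (sf_mulA y) [y * z]sf_mulC -sf_mulA. Qed.

Lemma sf_mulCA x y z : x * (y * z) = y * (x * z).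
Proof. by rewrite !sf_mulA [x * y]sf_mulC. Qed.

Lemma sf_inv_uniq x y : x * y = 1 -> x = y^-1.
Proof. by move=> xy; rewrite -[x]sf_mulr1 -(sf_mulVr y) sf_mulA xy sf_mul1. Qed.

Lemma sf_invM x y : (x * y)^-1 = x^-1 * y^-1.
Proof. by symmetry; apply: sf_inv_uniq; rewrite sf_mulACA !sf_mulV sf_mul1. Qed.

Lemma sf_mulDr x y z : x * (y + z) = x * y + x * z.
Proof. by rewrite sf_mulC sf_mulDl ![_ * x]sf_mulC. Qed.

Definition oadd (u v : option K) : option K :=
  match u, v with
  | None, _ => v
  | _, None => u
  | Some x, Some y => Some (x + y)
  end.

Lemma oaddA : associative oadd.
Proof. by case=> [x|] [y|] [z|] //=; rewrite sf_addA. Qed.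

Lemma oaddC : commutative oadd.
Proof. by case=> [x|] [y|] //=; rewrite sf_addC. Qed.

Lemma ssum_cons x (s : seq K) : ssum (x :: s) = oadd (Some x) (ssum s).
Proof. by rewrite /=; case: (ssum s). Qed.

Lemma ssum_cat (s1 s2 : seq K) : ssum (s1 ++ s2) = oadd (ssum s1) (ssum s2).
Proof. by elim: s1 => [|x s1 IH] //; rewrite cat_cons !ssum_cons IH oaddA. Qed.

Lemma ssum_perm (T : eqType) (F : T -> K) (s1 s2 : seq T) :
  perm_eq s1 s2 -> ssum (map F s1) = ssum (map F s2).
Proof.
elim: s1 s2 => [|x s1 IH] s2; first by rewrite perm_sym => /perm_nilP ->.
move=> eq12; have xs2 : x \in s2 by rewrite -(perm_mem eq12) mem_head.
case/splitPr: xs2 eq12 => t1 t2 eq12.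
have mid : perm_eq (t1 ++ x :: t2) (x :: t1 ++ t2).
  by move: (perm_catCA t1 [:: x] t2) => /= ->.
have /IH : perm_eq s1 (t1 ++ t2) by rewrite -(perm_cons x) (perm_trans eq12 mid).
rewrite map_cons ssum_cons => ->.
by rewrite !map_cat !ssum_cat map_cons ssum_cons !oaddA [oadd (Some _) _]oaddC.
Qed.

Lemma ssum_mull x (s : seq K) : ssum (map (sf_mul x) s) = omap (sf_mul x) (ssum s).
Proof.
elim: s => [|y s IH] //; rewrite map_cons !ssum_cons IH.
by case: ssum => //= z; rewrite sf_mulDr.
Qed.

Variable n : nat.

Lemma fvalE (f : {set 'I_n} -> K) (s : seq 'I_n) :
  fval f s = sf_prod (map f (evens (steps s))) * (sf_prod (map f (odds (steps s))))^-1.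
Proof.
rewrite /fval -(map_nth_iota_parity set0 f _ true) -(map_nth_iota_parity set0 f _ false) /=.
have parity b : [seq i <- iota 0 (size (steps s)) | odd i == b]
                = [seq i <- iota 0 (size (steps s)) | if b then odd i else ~~ odd i].
  by apply: eq_filter => i; case: b; case: odd.
by rewrite !parity.
Qed.

End SemifieldTheory.

(** * Splitting the T-paths from alpha at the diagonal d *)

Section Configuration.
Variables (n : nat) (zeta eta alpha beta : 'I_n).
Hypothesis zeta_neq_eta : zeta != eta.
Hypothesis alpha_U1 : cyc_lt zeta alpha eta.
Hypothesis beta_U2 : cyc_lt eta beta zeta.
Implicit Types (u v w x y z : 'I_n) (p q t : seq 'I_n) (e g : {set 'I_n}) (L : seq {set 'I_n}).

Local Notation P2 := [set e | cyc_le eta e zeta].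
Local Notation d := [set zeta; eta].

Lemma mem_P2 u : u \in P2 <-> cpos eta u <= cpos eta zeta.
Proof. by rewrite inE (cyc_le_cpos eta) cposxx /between; lia. Qed.

Lemma mem_d u : u \in d <-> cpos eta u = cpos eta zeta \/ cpos eta u = 0.
Proof. by rewrite !inE -(rwP orP) !(eqb_cpos eta) cposxx. Qed.

Lemma configuration_cpos : [/\ 0 < cpos eta zeta, cpos eta zeta < cpos eta alpha,
  0 < cpos eta beta & cpos eta beta < cpos eta zeta].
Proof.
move: zeta_neq_eta alpha_U1 beta_U2 (cpos_lt eta alpha).
rewrite (neq_cpos eta) !(cyc_lt_cpos eta) cposxx /between; split; lia.
Qed.

(* Counted from eta the configuration reads  eta = 0 < beta < zeta < alpha. *)
Ltac config_lia :=
  case: configuration_cpos; rewrite ?mem_P2 ?mem_d -?(rwP negP); cyc_lia eta.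

Lemma alpha_notin_P2 : alpha \notin P2.
Proof. by apply/negP; config_lia. Qed.

Lemma beta_in_P2 : beta \in P2.
Proof. by config_lia. Qed.

Lemma d_sub_P2 x : x \in d -> x \in P2.
Proof. by config_lia. Qed.

Lemma alpha_neq_beta : alpha != beta.
Proof. by config_lia. Qed.

Lemma beta_notin_d : beta \notin d.
Proof. by apply/negP; config_lia. Qed.

Lemma d_cross_alpha_beta : crossv zeta eta alpha beta.
Proof. by config_lia. Qed.

Lemma alpha_nocross_d u : u \in P2 -> ~~ crossv alpha u zeta eta -> u \in d.
Proof. by config_lia. Qed.

Lemma P2_nocross_d u v : u \in P2 -> v \in P2 -> ~~ crossv u v zeta eta.
Proof. by config_lia. Qed.

Lemma alpha_d_nocross_P2 x u v : x \in d -> u \in P2 -> v \in P2 -> ~~ crossv alpha x u v.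
Proof. by config_lia. Qed.

Lemma cyc_lt_alpha_P2 u v : u \in P2 -> v \in P2 ->
  cyc_lt u alpha v <-> cpos eta v < cpos eta u.
Proof. by case: configuration_cpos; rewrite !mem_P2 (cyc_lt_cpos eta) /between; lia. Qed.

Lemma crossv_alpha_beta_P2 u v : u \in P2 -> v \in P2 ->
  crossv u v alpha beta <-> cpos eta u < cpos eta beta < cpos eta v \/
                            cpos eta v < cpos eta beta < cpos eta u.
Proof. by case: configuration_cpos; rewrite !mem_P2 (crossv_cpos eta) /cross_nat /between; lia. Qed.

Lemma cyc_lt_alpha_d x u v : x \in d -> u \in P2 -> v \in P2 -> u != x -> v != x ->
  cyc_lt u alpha v = cyc_lt u x v.
Proof. by move=> xd uP vP ux vx; apply/idP/idP; move: xd uP vP ux vx; config_lia. Qed.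

Lemma crossv_alpha_d x u v : x \in d -> u \in P2 -> v \in P2 -> u != x -> v != x ->
  crossv u v alpha beta = crossv u v x beta.
Proof.
move=> xd uP vP ux vx; apply/idP/idP; rewrite crossv_alpha_beta_P2 //;
  by move: xd uP vP ux vx; config_lia.
Qed.

Lemma cyc_le_d_ends x x' u v : x \in d -> x' \in d -> x != x' ->
  u \in P2 -> v \in P2 -> cyc_lt u x' v -> cyc_le u x v.
Proof. by config_lia. Qed.

(* Along {alpha, beta}, once a crossing diagonal of P2 avoids an end of d, so do all
   later ones. *)
Lemma prec_avoid_d x y z u v : x \in d -> y \in P2 -> z \in P2 -> u \in P2 -> v \in P2 ->
  crossv y z alpha beta -> crossv u v alpha beta -> y != x -> z != x ->
  cyc_lt u alpha v -> cyc_le u y v -> cyc_le u z v -> (u != x) && (v != x).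
Proof.
move=> xd yP zP uP vP; rewrite !crossv_alpha_beta_P2 // cyc_lt_alpha_P2 //.
by move: xd yP zP uP vP; config_lia.
Qed.

Lemma alpha_neq_d x : x \in d -> alpha != x.
Proof. by move/d_sub_P2; apply: contraTneq => <-; apply: alpha_notin_P2. Qed.

Lemma d_neq_beta x : x \in d -> x != beta.
Proof. by apply: contraTneq => ->; apply: beta_notin_d. Qed.

Definition diagP2 (e : {set 'I_n}) : Prop :=
  exists u v, [/\ e = [set u; v], u \in P2 & v \in P2].

Lemma diagP2_mem e v : diagP2 e -> v \in e -> v \in P2.
Proof. by case=> a [b [-> Ha Hb]] /set2P[] ->. Qed.

Lemma steps_diagP2 x (p : seq 'I_n) e :
  all (fun v => v \in P2) (x :: p) -> e \in steps (x :: p) -> diagP2 e.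
Proof.
move/allP=> sub /mem_steps[u [v [-> Hu Hv]]].
by exists u, v; split; [|apply: sub..].
Qed.

Lemma alpha_notin_diagP2 e : diagP2 e -> alpha \notin e.
Proof. by move=> eP; apply/negP => /(diagP2_mem eP); apply/negP/alpha_notin_P2. Qed.

Lemma diagP2_nocross_d e : diagP2 e -> ~~ crossd e d.
Proof. by case=> u [v [-> Hu Hv]]; rewrite crossd_set2 P2_nocross_d. Qed.

Lemma crossd_alpha_d x e : x \in d -> diagP2 e -> x \notin e ->
  crossd e [set alpha; beta] = crossd e [set x; beta].
Proof.
move=> xd [u [v [-> Hu Hv]]]; rewrite !inE negb_or !crossd_set2 => /andP[xu xv].
by rewrite (crossv_alpha_d xd) // eq_sym.
Qed.

Lemma prec_alpha_d x e1 e : x \in d -> diagP2 e -> x \notin e ->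
  prec alpha e1 e = prec x e1 e.
Proof.
move=> xd [u [v [-> Hu Hv]]]; rewrite !inE negb_or => /andP[xu xv].
by rewrite !prec_set2 (cyc_lt_alpha_d xd Hu Hv) 1?eq_sym // (cyc_lt_alpha_d xd Hv Hu) // eq_sym.
Qed.

Lemma notin_prec_d x e1 e : x \in d -> diagP2 e1 -> diagP2 e ->
  crossd e1 [set alpha; beta] -> crossd e [set alpha; beta] -> x \notin e1 ->
  prec alpha e1 e -> x \notin e.
Proof.
move=> xd [y [z [-> Hy Hz]]] [u [v [-> Hu Hv]]]; rewrite !crossd_set2 !inE !negb_or.
move=> yz uv /andP[xy xz]; rewrite eq_sym in xy; rewrite eq_sym in xz.
rewrite prec_set2 !forall_set2 => /andP[_ /orP[] /and3P[a_in y_in z_in]].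
  by move: (prec_avoid_d xd Hy Hz Hu Hv yz uv xy xz a_in y_in z_in); rewrite ![x == _]eq_sym.
rewrite crossv_swapl in uv.
by move: (prec_avoid_d xd Hy Hz Hv Hu yz uv xy xz a_in y_in z_in); rewrite ![x == _]eq_sym andbC.
Qed.

Section Dissection.
Variables D D2 : {set {set 'I_n}}.
Hypothesis D_dissection : dissection [set: 'I_n] D.
Hypothesis D_split : D = d |: D2.
Hypothesis D2_dissection : dissection P2 D2.

Lemma d_in_D : d \in D.
Proof. by rewrite D_split setU11. Qed.

Lemma D2_diagP2 e : e \in D2 -> diagP2 e.
Proof. by move/(dissection_diag D2_dissection)=> [u [v [-> _ Hu Hv]]]; exists u, v. Qed.

Lemma D_diagP2 e : e \in D -> diagP2 e.
Proof.
rewrite D_split => /setU1P[->|/D2_diagP2 //].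
by exists zeta, eta; split; rewrite ?d_sub_P2 // !inE eqxx ?orbT.
Qed.

Lemma D_D2_notin x e : x \in d -> x \notin e -> (e \in D) = (e \in D2).
Proof.
move=> xd xe; rewrite D_split !inE; case: eqP => // ed.
by move: xe; rewrite ed xd.
Qed.

Lemma nocross_D_diagP2 g : diagP2 g ->
  [forall e in D, ~~ crossd g e] = [forall e in D2, ~~ crossd g e].
Proof.
move=> gP; rewrite D_split; apply/forallP/forallP => H e; apply/implyP => eD.
  by move: (H e); rewrite setU1r.
case/setU1P: eD => [->|eD2]; first exact: diagP2_nocross_d.
by move: (H e); rewrite eD2.
Qed.

Lemma alpha_d_nocross_D x : x \in d -> [forall e in D, ~~ crossd [set alpha; x] e].
Proof.
move=> xd; apply/forallP => e; apply/implyP => /D_diagP2[u [v [-> Hu Hv]]].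
by rewrite crossd_set2 alpha_d_nocross_P2.
Qed.

Lemma all_odd_alpha_d x L : x \in d -> {in L, forall e, diagP2 e /\ x \notin e} ->
  all (fun e => (e \in D) && crossd e [set alpha; beta]) L
  = all (fun e => (e \in D2) && crossd e [set x; beta]) L.
Proof.
move=> xd HL; apply: eq_in_all => e /HL[eP xe].
by rewrite (D_D2_notin xd xe) (crossd_alpha_d xd eP xe).
Qed.

Lemma pairwise_prec_alpha_d x L : x \in d -> {in L, forall e, diagP2 e /\ x \notin e} ->
  pairwise (prec alpha) L = pairwise (prec x) L.
Proof.
move=> xd HL; apply: (eq_in_pairwise (P := mem L)); last by apply/allP.
by move=> e1 e /= _ /HL[eP xe]; apply: prec_alpha_d.
Qed.

Lemma notin_prec_chain x e L : x \in d ->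
  all (fun e => (e \in D) && crossd e [set alpha; beta]) (e :: L) ->
  pairwise (prec alpha) (e :: L) -> x \notin e -> {in e :: L, forall e', x \notin e'}.
Proof.
move=> xd /allP HL; rewrite pairwise_cons => /andP[/allP He _] xe e'.
rewrite inE => /orP[/eqP-> //|e'L].
have /andP[eD ecr] := HL e (mem_head _ _).
have /andP[e'D e'cr] : (e' \in D) && crossd e' [set alpha; beta] by rewrite HL // inE e'L orbT.
exact: notin_prec_d xd (D_diagP2 eD) (D_diagP2 e'D) ecr e'cr xe (He _ e'L).
Qed.

Lemma alpha_step_notin_steps v y t : all (fun u => u \in P2) (y :: t) ->
  [set alpha; v] \notin steps (y :: t).
Proof.
by move=> tP; apply/negP => /(steps_diagP2 tP)/alpha_notin_diagP2; rewrite setU11.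
Qed.

Lemma nocross_steps_P2 y t : all (fun u => u \in P2) (y :: t) ->
  all (fun g => [forall e in D, ~~ crossd g e]) (steps (y :: t))
  = all (fun g => [forall e in D2, ~~ crossd g e]) (steps (y :: t)).
Proof. by move=> tP; apply: eq_in_all => g /(steps_diagP2 tP)/nocross_D_diagP2. Qed.

Lemma d_nocross_D2 : [forall e in D2, ~~ crossd d e].
Proof.
apply/forallP => e; apply/implyP => /D2_diagP2.
by rewrite crossd_sym; apply: diagP2_nocross_d.
Qed.

Lemma Tpath_alpha_P2 t : is_Tpath [set: 'I_n] D alpha beta (alpha :: t) ->
  all (fun v => v \in P2) t.
Proof.
case/TpathP=> last_t _ _ _ _ _ /allP odd_t _; apply/allP => v vt.
have [vl|/(inner_vertex_odd_step vt)[e /odd_t /andP[eD _]]] := eqVneq v (last alpha t).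
  by rewrite vl last_t beta_in_P2.
exact/diagP2_mem/D_diagP2.
Qed.

Lemma Tpath_second_vertex p : is_Tpath [set: 'I_n] D alpha beta p ->
  exists x t, p = [:: alpha, x & t] /\ x \in d.
Proof.
case: p => [//|a [|x t]] Hp; have a_alpha := Tpath_head Hp; subst a.
  by case/TpathP: Hp => /= ab; rewrite ab eqxx.
have /andP[xP2 _] := Tpath_alpha_P2 Hp; exists x, t; split=> //.
case/TpathP: Hp => _ _ _ _ _ /andP[/forallP/(_ d) + _] _ _.
by rewrite d_in_D crossd_set2 => /alpha_nocross_d; apply.
Qed.

Section Ends.
Variables x x' : 'I_n.
Hypotheses (x_d : x \in d) (x'_d : x' \in d) (x_neq_x' : x != x').

Lemma d_ends : [set x; x'] = d.
Proof.
move: x_d x'_d x_neq_x'; rewrite !inE.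
by case/orP=> /eqP-> /orP[] /eqP->; rewrite ?eqxx // setUC.
Qed.

Lemma prec_d_cross e : diagP2 e -> crossd e [set x'; beta] -> prec alpha d e.
Proof.
move=> [u [v [-> Hu Hv]]] cr.
have x'e : x' \notin [set u; v].
  by rewrite crossd_sym in cr; apply: crossd_disjoint cr _; rewrite setU11.
rewrite -d_ends prec_set2 !forall_set2; apply/andP; split.
  by apply: contraNneq x'e => <-; rewrite !inE eqxx orbT.
move: x'e cr; rewrite !inE negb_or crossd_set2 crossvE => /andP[ux' vx'] /and4P[uv _ _ _].
wlog lt_x' : u v Hu Hv uv ux' vx' / cyc_lt u x' v => [wlog_uv|].
  have [|] := boolP (cyc_lt u x' v); first exact: wlog_uv.
  rewrite -cyc_lt_sym // orbC => lt_x'.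
  by apply: wlog_uv; rewrite // eq_sym.
rewrite (cyc_lt_alpha_d x'_d) 1?eq_sym // lt_x' (cyc_ltW lt_x').
by rewrite (cyc_le_d_ends x_d x'_d x_neq_x' Hu Hv lt_x').
Qed.

Lemma d_notin_steps y t : x' \notin y :: t -> d \notin steps (y :: t).
Proof. by apply: contra => /mem_steps_vertex; apply. Qed.

Lemma Tpath_P2_odd t : is_Tpath P2 D2 x' beta (x' :: t) ->
  {in odds (steps (x' :: t)), forall e, diagP2 e /\ x' \notin e}.
Proof.
case/TpathP=> _ _ _ _ _ _ /allP odd_t _ e /odd_t /andP[eD2 cr].
split; first exact: D2_diagP2.
by rewrite crossd_sym in cr; apply: crossd_disjoint cr _; rewrite setU11.
Qed.

(* The bijection of the proof: [lift_path] prepends alpha, x and cancels an immediate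
   return along d; [drop_path] is its inverse on T-paths. *)
Definition lift_path q : seq 'I_n :=
  if q is [:: _, y & _] then (if y == x then alpha :: behead q else [:: alpha, x & q])
  else [:: alpha, x & q].

Definition drop_path p : seq 'I_n :=
  if p is [:: _, _, z & _] then (if z == x' then behead (behead p) else x' :: behead p)
  else x' :: behead p.

Lemma Tpath_lift_back t : is_Tpath P2 D2 x' beta [:: x', x & t] ->
  is_Tpath [set: 'I_n] D alpha beta [:: alpha, x & t].
Proof.
move=> Hq; have odd_q := Tpath_P2_odd Hq.
case/TpathP: Hq => last_t _ /andP[_ tP] /andP[_ adj_t] uniq_q nocross_q odd_cr prec_q.
move: uniq_q nocross_q; rewrite steps_cons2 cons_uniq all_cons.
move=> /andP[_ uniq_t] /andP[_ nocross_t].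
apply/TpathP; split.
- exact: last_t.
- exact: alpha_neq_beta.
- by apply/allP => v; rewrite in_setT.
- by apply/andP; split; [exact: alpha_neq_d | exact: adj_t].
- by rewrite steps_cons2 cons_uniq alpha_step_notin_steps.
- by rewrite steps_cons2 all_cons alpha_d_nocross_D // nocross_steps_P2.
- by rewrite (all_odd_alpha_d x'_d odd_q).
- by rewrite (pairwise_prec_alpha_d x'_d odd_q).
Qed.

Lemma Tpath_lift_through y t : y != x -> is_Tpath P2 D2 x' beta [:: x', y & t] ->
  is_Tpath [set: 'I_n] D alpha beta [:: alpha, x, x', y & t].
Proof.
move=> yx Hq; have odd_q := Tpath_P2_odd Hq.
case/TpathP: Hq => last_t x'_beta qP adj_q uniq_q nocross_q odd_cr prec_q.
have x'_t : x' \notin y :: t.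
  by apply: notin_tail_odd_steps; [move=> e /odd_q[] | rewrite last_t].
have xqP : all (fun u => u \in P2) [:: x, x', y & t].
  by apply/andP; split; [exact: d_sub_P2 | exact: qP].
apply/TpathP; split.
- exact: last_t.
- exact: alpha_neq_beta.
- by apply/allP => v; rewrite in_setT.
- by rewrite /= alpha_neq_d // x_neq_x'.
- rewrite [steps (alpha :: _)]steps_cons2 cons_uniq (alpha_step_notin_steps _ xqP) andTb.
  rewrite [steps (x :: _)]steps_cons2 d_ends cons_uniq uniq_q andbT.
  rewrite [steps (x' :: _)]steps_cons2 inE negb_or d_notin_steps // andbT.
  rewrite -d_ends; apply: contraNneq yx => /set2_inj[[xx' _]|[-> _]]; last exact: eqxx.
  by move: x_neq_x'; rewrite xx' eqxx.
- rewrite [steps (alpha :: _)]steps_cons2 all_cons alpha_d_nocross_D //.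
  rewrite [steps (x :: _)]steps_cons2 all_cons d_ends nocross_steps_P2 // nocross_q andbT.
  by apply/forallP => e; apply/implyP; apply: dissection_nocross D_dissection d_in_D.
- rewrite odds_steps_cons3 all_cons d_ends (all_odd_alpha_d x'_d odd_q) odd_cr andbT.
  by rewrite d_in_D crossd_set2 d_cross_alpha_beta.
- rewrite odds_steps_cons3 d_ends pairwise_cons (pairwise_prec_alpha_d x'_d odd_q) prec_q andbT.
  apply/allP => e eo; have [eP _] := odd_q e eo.
  by move/allP: odd_cr => /(_ e eo) /andP[_]; apply: prec_d_cross.
Qed.

Lemma lift_path_back t : lift_path [:: x', x & t] = [:: alpha, x & t].
Proof. by rewrite /= eqxx. Qed.

Lemma lift_path_through y t : y != x -> lift_path [:: x', y & t] = [:: alpha, x, x', y & t].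
Proof. by move=> /negbTE /= ->. Qed.

Lemma drop_path_back t : drop_path [:: alpha, x, x' & t] = x' :: t.
Proof. by rewrite /= eqxx. Qed.

Lemma drop_path_through y t : y != x' -> drop_path [:: alpha, x, y & t] = [:: x', x, y & t].
Proof. by move=> /negbTE /= ->. Qed.

Lemma nth_lift_path1 q : nth alpha (lift_path q) 1 = x.
Proof. by case: q => [|a [|y t]] //=; case: eqP. Qed.

Lemma Tpath_lift q : is_Tpath P2 D2 x' beta q -> is_Tpath [set: 'I_n] D alpha beta (lift_path q).
Proof.
case: q => [//|a [|y t]] Hq; have a_x' := Tpath_head Hq; subst a.
  by case/TpathP: Hq => /= x'_beta; rewrite x'_beta eqxx.
have [yx|yx] := eqVneq y x; first by rewrite yx lift_path_back; apply: Tpath_lift_back; rewrite -yx.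
by rewrite (lift_path_through _ yx); apply: Tpath_lift_through.
Qed.

Lemma odd_steps_avoid_x' t :
  all (fun uv => uv.1 != uv.2) (zip (x' :: t) t) -> uniq (steps (x' :: t)) ->
  all (fun e => (e \in D) && crossd e [set alpha; beta]) (odds (steps (x' :: t))) ->
  pairwise (prec alpha) (odds (steps (x' :: t))) ->
  {in odds (steps (x' :: t)), forall e, diagP2 e /\ x' \notin e}.
Proof.
move=> adj uniq_t odd_t prec_t e eo; split.
  by move/allP: odd_t => /(_ e eo) /andP[/D_diagP2].
case: t => [|w [|z t]] in adj uniq_t odd_t prec_t eo *; try done.
rewrite odds_steps_cons3 in odd_t prec_t eo.
apply: notin_prec_chain x'_d odd_t prec_t _ _ eo.
rewrite !inE negb_or [x' == z]eq_sym (uniq_steps_no_return uniq_t) andbT.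
by case/andP: adj.
Qed.

Lemma Tpath_drop_back t : is_Tpath [set: 'I_n] D alpha beta [:: alpha, x, x' & t] ->
  is_Tpath P2 D2 x' beta (x' :: t).
Proof.
move=> Hp; have /andP[_ tP] := Tpath_alpha_P2 Hp.
case/TpathP: Hp => last_t _ _ /and3P[_ _ adj_t] uniq_p nocross_p odd_p prec_p.
move: uniq_p nocross_p; rewrite !steps_cons2 !cons_uniq !all_cons.
move=> /and3P[_ _ uniq_t] /and3P[_ _ nocross_t].
rewrite odds_steps_cons3 in odd_p prec_p; move: odd_p prec_p.
rewrite all_cons pairwise_cons => /andP[_ odd_t] /andP[_ prec_t].
have odd_q := odd_steps_avoid_x' adj_t uniq_t odd_t prec_t.
apply/TpathP; split.
- exact: last_t.
- exact: d_neq_beta.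
- exact: tP.
- exact: adj_t.
- exact: uniq_t.
- by rewrite -nocross_steps_P2.
- by rewrite -(all_odd_alpha_d x'_d odd_q).
- by rewrite -(pairwise_prec_alpha_d x'_d odd_q).
Qed.

Lemma Tpath_drop_through y t : y != x' ->
  is_Tpath [set: 'I_n] D alpha beta [:: alpha, x, y & t] ->
  is_Tpath P2 D2 x' beta [:: x', x, y & t].
Proof.
move=> yx' Hp; have pP := Tpath_alpha_P2 Hp.
case/TpathP: Hp => last_t _ _ /andP[_ adj_p] uniq_p nocross_p odd_p prec_p.
move: uniq_p nocross_p; rewrite [steps (alpha :: _)]steps_cons2 cons_uniq all_cons.
move=> /andP[_ uniq_t] /andP[_ nocross_t].
have odd_q : {in odds (steps [:: x', x, y & t]), forall e, diagP2 e /\ x' \notin e}.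
  move=> e eo; split; first by move/allP: odd_p => /(_ e eo) /andP[/D_diagP2].
  apply: notin_prec_chain x'_d odd_p prec_p _ _ eo.
  by rewrite !inE negb_or ![x' == _]eq_sym x_neq_x' yx'.
have x'_t : x' \notin [:: x, y & t].
  apply: notin_tail_odd_steps; first by move=> e /odd_q[].
  by rewrite (_ : last x' _ = beta) ?d_neq_beta.
apply/TpathP; split.
- exact: last_t.
- exact: d_neq_beta.
- by rewrite all_cons d_sub_P2.
- by apply/andP; split; [rewrite /= eq_sym | ].
- by rewrite steps_cons2 cons_uniq uniq_t setUC d_ends d_notin_steps.
- by rewrite steps_cons2 all_cons setUC d_ends d_nocross_D2 -nocross_steps_P2.
- by rewrite -(all_odd_alpha_d x'_d odd_q).
- by rewrite -(pairwise_prec_alpha_d x'_d odd_q).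
Qed.

Lemma Tpath_drop t : is_Tpath [set: 'I_n] D alpha beta [:: alpha, x & t] ->
  is_Tpath P2 D2 x' beta (drop_path [:: alpha, x & t]).
Proof.
case: t => [|y t] Hp.
  by case/TpathP: Hp => /= x_beta; move: (d_neq_beta x_d); rewrite x_beta eqxx.
have [yx'|yx'] := eqVneq y x'.
  by rewrite yx' drop_path_back; apply: Tpath_drop_back; rewrite -yx'.
by rewrite (drop_path_through _ yx'); apply: Tpath_drop_through.
Qed.

Lemma lift_pathK : {in Tpaths P2 D2 x' beta, cancel lift_path drop_path}.
Proof.
move=> q; rewrite mem_Tpaths; case: q => [//|a [|y t]] Hq; have a_x' := Tpath_head Hq; subst a.
  by case/TpathP: Hq => /= x'_beta; move: (d_neq_beta x'_d); rewrite x'_beta eqxx.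
have [yx|yx] := eqVneq y x; last by rewrite lift_path_through // drop_path_back.
rewrite yx lift_path_back; case: t => [//|z t] in Hq *.
rewrite drop_path_through //; case/TpathP: Hq => _ _ _ _ uniq_q _ _ _.
exact: uniq_steps_no_return uniq_q.
Qed.

Lemma drop_pathK t : is_Tpath [set: 'I_n] D alpha beta [:: alpha, x & t] ->
  lift_path (drop_path [:: alpha, x & t]) = [:: alpha, x & t].
Proof.
case: t => [|y t] Hp; first by rewrite /= eqxx.
have [->|yx'] := eqVneq y x'; last by rewrite drop_path_through // lift_path_back.
rewrite drop_path_back; case: t => [//|w t] in Hp *.
rewrite lift_path_through //; case/TpathP: Hp => _ _ _ _ uniq_p _ _ _.
move: uniq_p; rewrite [steps (alpha :: _)]steps_cons2 cons_uniq.
by case/andP=> _ /uniq_steps_no_return.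
Qed.

Variables (K : semifield) (f : {set 'I_n} -> K).

Lemma fval_lift q : is_Tpath P2 D2 x' beta q ->
  fval f (lift_path q) = sf_mul (sf_inv (f d)) (sf_mul (f [set alpha; x]) (fval f q)).
Proof.
case: q => [//|a [|y t]] Hq; have a_x' := Tpath_head Hq; subst a.
  by case/TpathP: Hq => /= x'_beta; move: (d_neq_beta x'_d); rewrite x'_beta eqxx.
have [->|yx] := eqVneq y x.
  rewrite lift_path_back !fvalE !steps_cons2 /= [[set x'; x]]setUC d_ends.
  by rewrite [RHS]sf_mulCA -(sf_mulA (f d)) sf_mulKV sf_mulA.
rewrite (lift_path_through _ yx) !fvalE [steps (alpha :: _)]steps_cons2 steps_cons2 d_ends /=.
by rewrite sf_invM sf_mulACA [sf_mul (f _) (sf_inv _)]sf_mulC -sf_mulA.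
Qed.

Lemma ssum_lift :
  ssum [seq fval f p | p <- map lift_path (Tpaths P2 D2 x' beta)]
  = omap (sf_mul (sf_inv (f d)))
      (omap (sf_mul (f [set alpha; x])) (ssum [seq fval f q | q <- Tpaths P2 D2 x' beta])).
Proof.
rewrite -!ssum_mull -!map_comp; congr ssum; apply/eq_in_map => q.
by rewrite mem_Tpaths => /fval_lift.
Qed.

End Ends.

Lemma perm_Tpaths : perm_eq (Tpaths [set: 'I_n] D alpha beta)
  (map (lift_path zeta) (Tpaths P2 D2 eta beta) ++ map (lift_path eta) (Tpaths P2 D2 zeta beta)).
Proof.
have zeta_d : zeta \in d := set21 zeta eta; have eta_d : eta \in d := set22 zeta eta.
have eta_neq_zeta : eta != zeta by rewrite eq_sym.
apply: uniq_perm; first exact: Tpaths_uniq.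
  rewrite cat_uniq (map_inj_in_uniq (can_in_inj (lift_pathK zeta eta_d))).
  rewrite (map_inj_in_uniq (can_in_inj (lift_pathK eta zeta_d))) !Tpaths_uniq andbT.
  apply/hasPn => _ /mapP[q _ ->]; apply/negP => /mapP[q' _] /(congr1 (nth alpha ^~ 1)).
  by rewrite !nth_lift_path1; apply/eqP.
move=> p; rewrite mem_cat mem_Tpaths; apply/idP/orP => [Hp|[] /mapP[q]]; last first.
- by rewrite mem_Tpaths => /(Tpath_lift eta_d zeta_d eta_neq_zeta) ? ->.
- by rewrite mem_Tpaths => /(Tpath_lift zeta_d eta_d zeta_neq_eta) ? ->.
have [x [t [pE /set2P[] xE]]] := Tpath_second_vertex Hp; subst p x; [left | right].
  apply/mapP; exists (drop_path eta [:: alpha, zeta & t]); last by rewrite drop_pathK.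
  by rewrite mem_Tpaths; apply: Tpath_drop zeta_d eta_d zeta_neq_eta _ Hp.
apply/mapP; exists (drop_path zeta [:: alpha, eta & t]); last by rewrite drop_pathK.
by rewrite mem_Tpaths; apply: Tpath_drop eta_d zeta_d eta_neq_zeta _ Hp.
Qed.

Lemma ssum_Tpaths_alpha_beta (K : semifield) (f : {set 'I_n} -> K) :
  Tpath_formula P2 D2 f ->
  Some (sf_mul (sf_inv (f d))
          (sf_add (sf_mul (f [set alpha; zeta]) (f [set eta; beta]))
                  (sf_mul (f [set alpha; eta]) (f [set zeta; beta]))))
  = ssum [seq fval f p | p <- Tpaths [set: 'I_n] D alpha beta].
Proof.
move=> HT; have zeta_d : zeta \in d := set21 zeta eta; have eta_d : eta \in d := set22 zeta eta.
rewrite (ssum_perm _ perm_Tpaths) map_cat ssum_cat.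
rewrite (ssum_lift zeta_d eta_d zeta_neq_eta) (ssum_lift eta_d zeta_d _); last by rewrite eq_sym.
rewrite -(HT eta beta (d_sub_P2 eta_d) beta_in_P2 (d_neq_beta eta_d)).
rewrite -(HT zeta beta (d_sub_P2 zeta_d) beta_in_P2 (d_neq_beta zeta_d)).
by rewrite /= sf_mulDr.
Qed.

End Dissection.

End Configuration.

Theorem lemma3p9 (K : semifield) (n : nat) (Hn : 3 <= n)
  (D D2 : {set {set 'I_n}}) (zeta eta alpha beta : 'I_n)
  (f : {set 'I_n} -> K) :
  dissection [set: 'I_n] D ->
  [set zeta; eta] \in D ->
  D = [set zeta; eta] |: D2 ->
  dissection [set e | cyc_le eta e zeta] D2 ->
  cyc_lt zeta alpha eta ->
  cyc_lt eta beta zeta ->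
  Tpath_formula [set e | cyc_le eta e zeta] D2 f ->
  Some (sf_mul (sf_inv (f [set zeta; eta]))
          (sf_add (sf_mul (f [set alpha; zeta]) (f [set eta; beta]))
                  (sf_mul (f [set alpha; eta]) (f [set zeta; beta]))))
  = ssum [seq fval f p | p <- Tpaths [set: 'I_n] D alpha beta].
Proof.
move=> D_dissection d_in_D D_split D2_dissection alpha_U1 beta_U2.
have zeta_neq_eta := dissection_set2_neq D_dissection d_in_D.
exact: ssum_Tpaths_alpha_beta.
Qed.
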